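(* Under the hypotheses below (for SGDA or SEG), for all $x^*\in X^*$ there exist constants $c_1\in(0,1)$, $c_2\in(0,\infty)$ such that, with $V(x,x^* )=\|x-x^*\|^2+1$ (a function $\mathbb{R}^d\to[1,\infty)$), $$\mathbb{E}\big[V(X_{t+1},x^* )\mid\mathcal{F}_t\big]\le c_1 V(X_t,x^* )+c_2\quad\text{for all }t\ge0.$$ Hypotheses: $F:\mathbb{R}^d\to\mathbb{R}^d$, $X^*=\{x:F(x)=0\}$ nonempty with some $x^*\in X^*$, $\|x^*\|\le R$; there are $\lambda\ge0,\mu>0$ with $\langle F(x),x-x^*\rangle\ge\mu\|x-x^*\|^2-\lambda$ for all $x$ and some $x^*\in X^*$; the stochastic oracle assumptions of the context hold; and either (i) SGDA $X_{t+1}=X_t-\gamma(F(X_t)+U_t(X_t))$ with $\|F(x)\|\le G(1+\|x\|)$ for all $x$ and $0<\gamma<\mu/G^2$, or (ii) SEG $X_{t+1/2}=X_t-\gamma(F(X_t)+U_t(X_t))$, $X_{t+1}=X_t-\alpha\gamma(F(X_{t+1/2})+U_{t+1/2}(X_{t+1/2}))$ with $F$ $L$-Lipschitz, $0<\gamma<\frac1{2\mu+\sqrt3 L}$, $\alpha\in(0,1)$.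
   Context: Stochastic oracle: the noise fields $(U_t(\cdot))$ (and $U_{t+1/2}$ for SEG) are i.i.d. random fields; there is a filtration $(\mathcal{F}_t)$ (history of the iterates, $\mathcal{F}_{t+1/2}=\mathcal{F}_t$) with $U_t(X_t)$ $\mathcal{F}_{t+1}$-measurable but not $\mathcal{F}_t$-measurable, $\mathbb{E}[U_t(x)\mid\mathcal{F}_t]=0$ and $\mathbb{E}[\|U_t(x)\|^2\mid\mathcal{F}_t]\le\sigma^2$ for all $x$, for some $\sigma>0$. *)

From HB Require Import structures.
From mathcomp Require Import all_boot all_order all_algebra.
From mathcomp Require Import all_classical all_reals all_analysis.
Set Implicit Arguments. Unset Strict Implicit. Unset Printing Implicit Defensive.
Import Order.TTheory GRing.Theory Num.Theory.
Import numFieldNormedType.Exports.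
Local Open Scope classical_set_scope.
Local Open Scope ring_scope.

(** Vectors of R^d are row vectors 'rV[R]_d; Euclidean inner product and norm
    (the library's norm on matrices is the sup norm, so we define ours). *)
Definition dotv {R : realType} {d : nat} (u v : 'rV[R]_d) : R :=
  \sum_(i < d) u ord0 i * v ord0 i.
Definition enorm {R : realType} {d : nat} (u : 'rV[R]_d) : R :=
  Num.sqrt (dotv u u).

Definition Vfun {R : realType} {d : nat} (x xs : 'rV[R]_d) : R :=
  enorm (x - xs) ^+ 2 + 1.

Definition borelV (R : realType) (d : nat) : set (set 'rV[R]_d) :=
  smallest (sigma_algebra setT) [set A | open A].

Definition borel_fun {R : realType} {d : nat} (F : 'rV[R]_d -> 'rV[R]_d) :=
  forall B : set 'rV[R]_d, borelV B -> borelV (F @^-1` B).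

Definition sub_sigma {dT : measure_display} {T : measurableType dT}
  (G : set (set T)) := sigma_algebra setT G /\ G `<=` measurable.

Definition filtration {dT : measure_display} {T : measurableType dT}
  (Fl : nat -> set (set T)) :=
  (forall t, sub_sigma (Fl t)) /\ (forall t, Fl t `<=` Fl t.+1).

Definition meas_wrt {dT : measure_display} {T : measurableType dT}
  {R : realType} {d : nat} (G : set (set T)) (Y : T -> 'rV[R]_d) :=
  forall B : set 'rV[R]_d, borelV B -> G (Y @^-1` B).

(** Stochastic oracle assumptions for a noise field U : T -> R^d -> R^d
    (omega |-> U(omega, .)) relative to the sigma-algebra G (the "past")
    and Gnext (the next filtration element):
    for every G-measurable random point Y,
    - omega |-> U(omega, Y omega) is Gnext-measurable,
    - E[U(Y) | G] = 0 (integrable, and its integral over every A in G vanishes,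
      coordinatewise),
    - E[ ||U(Y)||^2 | G ] <= sigma^2 (integral characterization). *)
Definition oracle {dT : measure_display} {T : measurableType dT}
  {R : realType} {d : nat} (P : probability T R)
  (G Gnext : set (set T)) (sigma : R) (U : T -> 'rV[R]_d -> 'rV[R]_d) :=
  forall Y : T -> 'rV[R]_d, meas_wrt G Y ->
    [/\ meas_wrt Gnext (fun w => U w (Y w)),
        (forall i, P.-integrable setT (fun w => ((U w (Y w)) ord0 i)%:E)),
        (forall A, G A -> forall i,
            (\int[P]_(w in A) ((U w (Y w)) ord0 i)%:E = 0)%E) &
        (forall A, G A ->
            (\int[P]_(w in A) ((enorm (U w (Y w))) ^+ 2)%:E
               <= (sigma ^+ 2)%:E * P A)%E)].

(** Conditional-expectation inequality  E[Z | G] <= W  for nonnegative Z and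
    G-measurable nonnegative W, in its integral characterization:
    for all A in G,  int_A Z dP <= int_A W dP. *)
Definition cond_le {dT : measure_display} {T : measurableType dT}
  {R : realType} (P : probability T R) (G : set (set T)) (Z W : T -> R) :=
  forall A, G A -> (\int[P]_(w in A) (Z w)%:E <= \int[P]_(w in A) (W w)%:E)%E.

From HB Require Import structures.
From mathcomp Require Import all_boot all_order all_algebra.
From mathcomp Require Import all_classical all_reals all_analysis.
From mathcomp Require Import measurable_realfun.
From mathcomp Require Import ring lra.
Import Order.TTheory GRing.Theory Num.Theory.
Import numFieldNormedType.Exports.
Local Open Scope classical_set_scope.
Local Open Scope ring_scope.

(* The deterministic part g of either step satisfies a geometric drift for the
   squared distance to x0: |g x - x0|^2 <= q |x - x0|^2 + C with q < 1.  For
   SGDA this follows from coercivity and the linear growth of F; for SEG from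
   coercivity at the extrapolated point y = x - gamma F x together with
   |F y - F x| <= L gamma |F x|, which keeps the two gradients almost aligned.
   By Young's inequality |a + b|^2 <= (1 + s)|a|^2 + (1 + 1/s)|b|^2 with a small
   s, such a drift survives moving the centre to any other zero xs and adding a
   perturbation e, at the price of a rate still below 1 and a term K |e|^2.
   The perturbation is the oracle noise (for SEG also the change of F caused by
   the noisy extrapolation, bounded through the Lipschitz constant), whose
   conditional second moment is a multiple of sigma^2; integrating the
   pointwise bound over the events of F_t gives the conditional inequality. *)

Section Euclid.
Context {R : realType} {d : nat}.
Implicit Types (u v w : 'rV[R]_d).

Lemma dotvC u v : dotv u v = dotv v u.
Proof. by apply: eq_bigr => i _; rewrite mulrC. Qed.

Lemma dotvDl u v w : dotv (u + v) w = dotv u w + dotv v w.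
Proof. by rewrite /dotv -big_split; apply: eq_bigr => i _; rewrite mxE mulrDl. Qed.

Lemma dotvZl (a : R) u v : dotv (a *: u) v = a * dotv u v.
Proof. by rewrite /dotv mulr_sumr; apply: eq_bigr => i _; rewrite mxE mulrA. Qed.

Lemma dotvNl u v : dotv (- u) v = - dotv u v.
Proof. by rewrite -scaleN1r dotvZl mulN1r. Qed.

Lemma dotvDr u v w : dotv u (v + w) = dotv u v + dotv u w.
Proof. by rewrite dotvC dotvDl !(dotvC u). Qed.

Lemma dotvZr (a : R) u v : dotv u (a *: v) = a * dotv u v.
Proof. by rewrite dotvC dotvZl dotvC. Qed.

Lemma dotvNr u v : dotv u (- v) = - dotv u v.
Proof. by rewrite dotvC dotvNl dotvC. Qed.

Lemma dotvv_ge0 u : 0 <= dotv u u.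
Proof. by apply: sumr_ge0 => i _; rewrite -expr2 sqr_ge0. Qed.

Lemma enorm_ge0 u : 0 <= enorm u.
Proof. exact: sqrtr_ge0. Qed.

Lemma enorm_sqr u : enorm u ^+ 2 = dotv u u.
Proof. by rewrite sqr_sqrtr // dotvv_ge0. Qed.

Lemma dotvvD u v : dotv (u + v) (u + v) = dotv u u + 2 * dotv u v + dotv v v.
Proof. by rewrite !dotvDl !dotvDr (dotvC v u) mulr2n; ring. Qed.

Lemma dotvvB u v : dotv (u - v) (u - v) = dotv u u - 2 * dotv u v + dotv v v.
Proof. by rewrite dotvvD dotvNr dotvNl dotvNr opprK mulrN. Qed.

Lemma dotvvZ (a : R) u : dotv (a *: u) (a *: u) = a ^+ 2 * dotv u u.
Proof. by rewrite dotvZl dotvZr mulrA -expr2. Qed.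

Lemma dotvvN u : dotv (- u) (- u) = dotv u u.
Proof. by rewrite dotvNl dotvNr opprK. Qed.

Lemma dotvvD_le u v {e : R} : 0 < e ->
  dotv (u + v) (u + v) <= (1 + e) * dotv u u + (1 + e^-1) * dotv v v.
Proof.
move=> e_gt0.
(* From 0 <= |e u - v|^2 / e. *)
have young : 2 * dotv u v <= e * dotv u u + e^-1 * dotv v v.
  have inv_ge0 : 0 <= e^-1 by rewrite invr_ge0 ltW.
  have := mulr_ge0 inv_ge0 (dotvv_ge0 (e *: u - v)).
  rewrite dotvvB dotvvZ dotvZl.
  have -> : e^-1 * (e ^+ 2 * dotv u u - 2 * (e * dotv u v) + dotv v v) =
            e * dotv u u - 2 * dotv u v + e^-1 * dotv v v.
    by field; rewrite gt_eqF.
  lra.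
rewrite dotvvD; lra.
Qed.

Lemma dotvvD_le2 u v : dotv (u + v) (u + v) <= 2 * dotv u u + 2 * dotv v v.
Proof. by have := dotvvD_le u v ltr01; rewrite invr1. Qed.

End Euclid.

Section Drift.
Context {R : realType} {d : nat}.
Implicit Types (x c : 'rV[R]_d) (g : 'rV[R]_d -> 'rV[R]_d).

Definition geometric_drift g c := exists q C : R,
  [/\ 0 <= q, q < 1, 0 <= C &
      forall x, dotv (g x - c) (g x - c) <= q * dotv (x - c) (x - c) + C].

Lemma contraction_slack {q : R} : 0 <= q -> q < 1 ->
  0 < (1 - q) / 2 /\ (1 + (1 - q) / 2) * q <= (1 + q) / 2.
Proof. by move=> q_ge0 q_lt1; split; nra. Qed.

Lemma dotvvD_perturb {q C : R} : 0 <= q -> q < 1 -> 0 <= C ->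
  exists q' C' K : R, [/\ 0 < q', q' < 1, 0 <= C', 0 <= K &
    forall (u v : 'rV[R]_d) (n : R), 0 <= n -> dotv u u <= q * n + C ->
      dotv (u + v) (u + v) <= q' * n + C' + K * dotv v v].
Proof.
move=> q_ge0 q_lt1 C_ge0; have [s_gt0 slack] := contraction_slack q_ge0 q_lt1.
set s := (1 - q) / 2 in s_gt0 slack.
have K_ge0 : 0 <= 1 + s^-1 by rewrite addr_ge0 // invr_ge0 ltW.
exists ((1 + q) / 2), ((1 + s) * C), (1 + s^-1).
split=> //; [lra | lra | nra | move=> u v n n_ge0 hu].
apply: le_trans (dotvvD_le u v s_gt0) _; rewrite lerD2r.
have : (1 + s) * dotv u u <= (1 + s) * (q * n + C) by rewrite ler_pM2l //; lra.
have : (1 + s) * q * n <= (1 + q) / 2 * n by exact: ler_wpM2r.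
lra.
Qed.

Lemma geometric_drift_recenter g c c' :
  geometric_drift g c -> geometric_drift g c'.
Proof.
move=> [q [C [q_ge0 q_lt1 C_ge0 drift]]].
have [s_gt0 slack] := contraction_slack q_ge0 q_lt1.
set s := (1 - q) / 2 in s_gt0 slack.
set D := dotv (c' - c) (c' - c).
have D_ge0 : 0 <= D := dotvv_ge0 _.
have K_ge0 : 0 <= 1 + s^-1 by rewrite addr_ge0 // invr_ge0 ltW.
have drift' x : dotv (g x - c) (g x - c) <=
    (1 + q) / 2 * dotv (x - c') (x - c') + (q * ((1 + s^-1) * D) + C).
  have := dotvvD_le (x - c') (c' - c) s_gt0; rewrite addrA subrK -/D => hx.
  have := ler_wpM2l q_ge0 hx.
  have := ler_wpM2r (dotvv_ge0 (x - c')) slack.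
  have := drift x; lra.
have C1_ge0 : 0 <= q * ((1 + s^-1) * D) + C by rewrite addr_ge0 // !mulr_ge0.
have q1_ge0 : 0 <= (1 + q) / 2 by lra.
have q1_lt1 : (1 + q) / 2 < 1 by lra.
have [q' [C' [K [q'_gt0 q'_lt1 C'_ge0 K'_ge0 perturb]]]] :=
  dotvvD_perturb q1_ge0 q1_lt1 C1_ge0.
exists q', (C' + K * D); split; [exact: ltW | by [] | by rewrite addr_ge0 ?mulr_ge0 |].
move=> x; have := perturb _ (c - c') _ (dotvv_ge0 (x - c')) (drift' x).
by rewrite addrA subrK -[c - c']opprB dotvvN -addrA.
Qed.

End Drift.

Section Operator.
Context {R : realType} {d : nat} (F : 'rV[R]_d -> 'rV[R]_d).
Implicit Types (x y : 'rV[R]_d).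

Definition sgda_map (gamma : R) x := x - gamma *: F x.

Definition seg_map (gamma alpha : R) x :=
  x - (alpha * gamma) *: F (sgda_map gamma x).

Lemma lipschitz_dotvv {L : R} x y :
  (forall x y, enorm (F x - F y) <= L * enorm (x - y)) ->
  dotv (F x - F y) (F x - F y) <= L ^+ 2 * dotv (x - y) (x - y).
Proof.
move=> lip; rewrite -!enorm_sqr -exprMn.
apply: lerXn2r; rewrite ?nnegrE ?enorm_ge0 ?lip //.
exact: le_trans (enorm_ge0 _) (lip x y).
Qed.

(* Young's inequality with e = 1/4, once for (1 + |x|)^2 and once for |x|^2. *)
Lemma growth_dotvv {G : R} x0 x :
  (forall x, enorm (F x) <= G * (1 + enorm x)) ->
  dotv (F x) (F x) <=
    G ^+ 2 * (25/16 * dotv (x - x0) (x - x0) + (25/4 * dotv x0 x0 + 5)).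
Proof.
move=> growth.
have x_le : enorm x ^+ 2 <= 5/4 * dotv (x - x0) (x - x0) + 5 * dotv x0 x0.
  have quarter_gt0 : 0 < 4^-1 :> R by rewrite invr_gt0.
  have := dotvvD_le (x - x0) x0 quarter_gt0.
  by rewrite subrK invrK enorm_sqr; lra.
have one_x_le : (1 + enorm x) ^+ 2 <= 5/4 * enorm x ^+ 2 + 5.
  by have := sqr_ge0 (enorm x / 2 - 2); nra.
rewrite -enorm_sqr; apply: le_trans (_ : (G * (1 + enorm x)) ^+ 2 <= _).
  apply: lerXn2r; rewrite ?nnegrE ?enorm_ge0 ?growth //.
  exact: le_trans (enorm_ge0 _) (growth x).
by rewrite exprMn ler_wpM2l ?sqr_ge0 //; lra.
Qed.

Lemma geometric_drift_sgda {x0} {lam mu G gamma : R} :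
  0 <= lam -> 0 < mu ->
  (forall x, dotv (F x) (x - x0) >= mu * enorm (x - x0) ^+ 2 - lam) ->
  (forall x, enorm (F x) <= G * (1 + enorm x)) ->
  0 < gamma -> gamma < mu / G ^+ 2 ->
  geometric_drift (sgda_map gamma) x0.
Proof.
move=> lam_ge0 mu_gt0 coercive growth gamma_gt0 gamma_lt.
have gG : gamma * G ^+ 2 < mu.
  have [G0 | G_neq0] := eqVneq G 0.
    by move: gamma_lt; rewrite G0 expr0n /= invr0 mulr0; lra.
  by rewrite -ltr_pdivlMr // exprn_even_gt0.
set B := 25/4 * dotv x0 x0 + 5.
have B_ge0 : 0 <= B by rewrite /B; have := dotvv_ge0 x0; lra.
pose q := 1 - 2 * gamma * mu + 25/16 * gamma ^+ 2 * G ^+ 2.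
have q_lt1 : q < 1.
  have : 0 < gamma * (mu - 25/32 * (gamma * G ^+ 2)).
    by apply: mulr_gt0 => //; lra.
  rewrite /q; nra.
exists (Num.max q 0), (2 * gamma * lam + gamma ^+ 2 * G ^+ 2 * B).
split; first by rewrite le_max lexx orbT.
- by rewrite gt_max q_lt1 ltr01.
- apply: addr_ge0; first by rewrite !mulr_ge0 // ltW.
  exact: mulr_ge0 (mulr_ge0 (sqr_ge0 _) (sqr_ge0 _)) B_ge0.
move=> x; set n := dotv (x - x0) (x - x0).
have n_ge0 : 0 <= n := dotvv_ge0 _.
have cross : mu * n - lam <= dotv (x - x0) (F x) by rewrite /n -enorm_sqr dotvC.
rewrite /sgda_map addrAC dotvvB dotvZr dotvvZ -/n.
have := ler_wpM2l (sqr_ge0 gamma) (growth_dotvv x0 x growth).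
have := ler_wpM2l (ltW gamma_gt0) cross.
have : q * n <= Num.max q 0 * n by rewrite ler_wpM2r // le_max lexx.
rewrite -/n -/B /q; lra.
Qed.

Lemma seg_stepsize_le {mu L gamma : R} : 0 < mu -> 0 <= L -> 0 < gamma ->
  gamma < 1 / (2 * mu + Num.sqrt 3 * L) -> 3 * (L ^+ 2 * gamma ^+ 2) <= 1.
Proof.
move=> mu_gt0 L_ge0 gamma_gt0.
have sqrt3_ge0 : 0 <= Num.sqrt 3 :> R := sqrtr_ge0 _.
have den_gt0 : 0 < 2 * mu + Num.sqrt 3 * L by have := mulr_ge0 sqrt3_ge0 L_ge0; lra.
rewrite ltr_pdivlMr // => gamma_lt.
have : Num.sqrt 3 * L * gamma < 1 by nra.
have : 0 <= Num.sqrt 3 * L * gamma by rewrite !mulr_ge0 // ltW.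
have : (Num.sqrt 3 * L * gamma) ^+ 2 = 3 * (L ^+ 2 * gamma ^+ 2).
  by rewrite !exprMn sqr_sqrtr // mulrA.
nra.
Qed.

Lemma seg_descent {x0} {lam mu L gamma alpha : R} x :
  (forall x, dotv (F x) (x - x0) >= mu * enorm (x - x0) ^+ 2 - lam) ->
  (forall x y, enorm (F x - F y) <= L * enorm (x - y)) ->
  3 * (L ^+ 2 * gamma ^+ 2) <= 1 -> 0 < gamma -> 0 < alpha -> alpha <= 1 ->
  dotv (seg_map gamma alpha x - x0) (seg_map gamma alpha x - x0) <=
    dotv (x - x0) (x - x0)
    - 2 * (alpha * gamma) *
        (mu * dotv (sgda_map gamma x - x0) (sgda_map gamma x - x0) - lam)
    - 2/3 * (alpha * gamma * gamma) * dotv (F x) (F x).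
Proof.
move=> coercive lip Lgamma gamma_gt0 alpha_gt0 alpha_le1.
set y := sgda_map gamma x; set u := F x; set v := F y; set a := alpha * gamma.
have a_gt0 : 0 < a by rewrite mulr_gt0.
have nu_ge0 : 0 <= dotv u u := dotvv_ge0 _.
(* The extrapolated gradient v stays close to u: |v - u|^2 <= |u|^2 / 3. *)
have uv_ge : 2 * dotv u v >= dotv v v + 2/3 * dotv u u.
  have := lipschitz_dotvv y x lip; rewrite dotvvB (dotvC v u).
  have -> : y - x = - (gamma *: u) by rewrite /y /sgda_map addrAC subrr add0r.
  rewrite dotvvN dotvvZ.
  have := ler_wpM2r nu_ge0 Lgamma; lra.
have monotone : dotv (x - x0) v >= mu * dotv (y - x0) (y - x0) - lam + gamma * dotv u v.
  have -> : x - x0 = (y - x0) + gamma *: u by rewrite /y /sgda_map addrAC subrK.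
  rewrite (dotvDl (y - x0)) dotvZl (dotvC (y - x0)); have := coercive y.
  by rewrite enorm_sqr; lra.
have a2_le : a ^+ 2 <= a * gamma.
  by rewrite expr2 ler_pM2l // /a -[leRHS]mul1r ler_pM2r.
rewrite /seg_map -/y -/v addrAC (dotvvB (x - x0)) dotvZr dotvvZ -/a.
have := ler_wpM2r (dotvv_ge0 v) a2_le.
have := ler_wpM2l (ltW a_gt0) monotone.
have := ler_wpM2l (mulr_ge0 (ltW a_gt0) (ltW gamma_gt0)) uv_ge.
lra.
Qed.

Lemma geometric_drift_seg {x0} {lam mu L gamma alpha : R} :
  0 <= lam -> 0 < mu ->
  (forall x, dotv (F x) (x - x0) >= mu * enorm (x - x0) ^+ 2 - lam) ->
  0 <= L -> (forall x y, enorm (F x - F y) <= L * enorm (x - y)) ->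
  0 < gamma -> gamma < 1 / (2 * mu + Num.sqrt 3 * L) -> 0 < alpha -> alpha < 1 ->
  geometric_drift (seg_map gamma alpha) x0.
Proof.
move=> lam_ge0 mu_gt0 coercive L_ge0 lip gamma_gt0 gamma_lt alpha_gt0 alpha_lt1.
have Lgamma := seg_stepsize_le mu_gt0 L_ge0 gamma_gt0 gamma_lt.
have a_gt0 : 0 < alpha * gamma by rewrite mulr_gt0.
(* Small enough that c |x - x0|^2 <= 2 c |y - x0|^2 + 2 c gamma^2 |F x|^2 is
   paid for by the two decrease terms of seg_descent. *)
pose c := Num.min (alpha * gamma * mu) (alpha / 3).
have c_gt0 : 0 < c by rewrite lt_min !mulr_gt0 ?invr_gt0.
have c_le_amu : c <= alpha * gamma * mu by rewrite ge_min lexx.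
have c_le_alpha : c <= alpha / 3 by rewrite ge_min lexx orbT.
exists (1 - c), (2 * (alpha * gamma) * lam); split; [lra | lra | |].
  exact: mulr_ge0 (mulr_ge0 (ler0n _ 2) (ltW a_gt0)) lam_ge0.
move=> x; set y := sgda_map gamma x.
have := seg_descent x coercive lip Lgamma gamma_gt0 alpha_gt0 (ltW alpha_lt1).
rewrite -/y; set n := dotv (x - x0) (x - x0); set ny := dotv (y - x0) (y - x0).
set nu := dotv (F x) (F x).
have n_le : n <= 2 * ny + 2 * (gamma ^+ 2 * nu).
  rewrite /n; have -> : x - x0 = (y - x0) + gamma *: F x by rewrite /y /sgda_map addrAC subrK.
  by rewrite -dotvvZ dotvvD_le2.
have := ler_wpM2l (ltW c_gt0) n_le.
have := ler_wpM2r (dotvv_ge0 (y - x0)) c_le_amu.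
have := ler_wpM2r (mulr_ge0 (sqr_ge0 gamma) (dotvv_ge0 (F x))) c_le_alpha.
rewrite -/ny -/nu; nra.
Qed.

Lemma sgda_step_deviation (gamma : R) x u :
  dotv (x - gamma *: (F x + u) - sgda_map gamma x)
       (x - gamma *: (F x + u) - sgda_map gamma x) = gamma ^+ 2 * enorm u ^+ 2.
Proof.
have -> : x - gamma *: (F x + u) - sgda_map gamma x = - (gamma *: u).
  by rewrite /sgda_map scalerDr opprD addrA addrAC opprB addrA subrK addrC addKr.
by rewrite dotvvN dotvvZ enorm_sqr.
Qed.

Lemma seg_step_deviation {L gamma alpha : R} {x xh u uh} :
  (forall x y, enorm (F x - F y) <= L * enorm (x - y)) ->
  xh = x - gamma *: (F x + u) ->
  dotv (x - (alpha * gamma) *: (F xh + uh) - seg_map gamma alpha x)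
       (x - (alpha * gamma) *: (F xh + uh) - seg_map gamma alpha x) <=
    (alpha * gamma) ^+ 2 *
      (2 * (L ^+ 2 * gamma ^+ 2) * enorm u ^+ 2 + 2 * enorm uh ^+ 2).
Proof.
move=> lip xh_def; set y := sgda_map gamma x.
have -> : x - (alpha * gamma) *: (F xh + uh) - seg_map gamma alpha x =
          - ((alpha * gamma) *: (F xh - F y + uh)).
  by rewrite /seg_map -/y; apply/rowP => i; rewrite !mxE; ring.
have xh_y : xh - y = - (gamma *: u).
  by rewrite xh_def /y /sgda_map; apply/rowP => i; rewrite !mxE; ring.
rewrite dotvvN dotvvZ ler_wpM2l ?sqr_ge0 //.
apply: le_trans (dotvvD_le2 _ _) _; rewrite !enorm_sqr.
have := lipschitz_dotvv xh y lip; rewrite xh_y dotvvN dotvvZ; lra.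
Qed.

End Operator.

Section Measurability.
Context {dT : measure_display} {T : measurableType dT} {R : realType} {d : nat}.
Context {G : set (set T)} {Y : T -> 'rV[R]_d}.
Context (G_meas : G `<=` measurable) (Y_meas : meas_wrt G Y).

Lemma measurable_coord i : measurable_fun setT (fun w => Y w ord0 i).
Proof.
apply: (measurability _ (RGenOpens.measurableE R)).
move=> _ [_ [a [b ->] <-]]; rewrite setTI; apply: G_meas.
apply: (Y_meas ((fun M => M ord0 i) @^-1` `]a, b[%classic)).
apply: sub_sigma_algebra; have /continuousP := @coord_continuous R 1 d ord0 i.
by apply; exact: interval_open.
Qed.

Lemma measurable_enorm_sqrB c : measurable_fun setT (fun w => enorm (Y w - c) ^+ 2).
Proof.
have -> : (fun w => enorm (Y w - c) ^+ 2) =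
    (fun w => \sum_(i < d) (Y w ord0 i - c ord0 i) * (Y w ord0 i - c ord0 i)).
  by apply: funext => w; rewrite enorm_sqr; apply: eq_bigr => i _; rewrite !mxE.
apply: measurable_sum => i.
by apply: measurable_funM; apply: measurable_funB => //; exact: measurable_coord.
Qed.

Lemma measurable_enorm_sqr : measurable_fun setT (fun w => enorm (Y w) ^+ 2).
Proof.
by have := measurable_enorm_sqrB 0; under eq_fun do rewrite subr0.
Qed.

End Measurability.

Definition noise_le {dT : measure_display} {T : measurableType dT} {R : realType}
    (P : probability T R) (G : set (set T)) (N : T -> R) (s : R) :=
  [/\ 0 <= s, measurable_fun setT N, (forall w, 0 <= N w) &
      cond_le P G N (fun=> s)].

Section Noise.
Context {dT : measure_display} {T : measurableType dT} {R : realType}.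
Context {P : probability T R} {G : set (set T)} (G_meas : G `<=` measurable).
Local Open Scope ereal_scope.

Lemma noise_leD {N1 N2 s1 s2} : noise_le P G N1 s1 -> noise_le P G N2 s2 ->
  noise_le P G (fun w => N1 w + N2 w)%R (s1 + s2).
Proof.
move=> [s1_ge0 mN1 N1_ge0 le1] [s2_ge0 mN2 N2_ge0 le2].
split; [exact: addr_ge0 | exact: measurable_funD | by move=> w; exact: addr_ge0 |].
move=> A GA; have mA := G_meas _ GA.
under eq_integral do rewrite EFinD.
under [X in _ <= X]eq_integral do rewrite EFinD.
rewrite ge0_integralD // 1?[X in _ <= X]ge0_integralD //.
- exact: leeD (le1 A GA) (le2 A GA).
all: by [move=> w _; rewrite lee_fin | exact/measurable_EFinP/measurable_funTS].
Qed.

Lemma noise_leZ {k : R} {N s} : (0 <= k)%R -> noise_le P G N s ->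
  noise_le P G (fun w => k * N w)%R (k * s).
Proof.
move=> k_ge0 [s_ge0 mN N_ge0 le].
split; [exact: mulr_ge0 | exact: measurable_funM | by move=> w; exact: mulr_ge0 |].
move=> A GA; have mA := G_meas _ GA.
under eq_integral do rewrite EFinM.
under [X in _ <= X]eq_integral do rewrite EFinM.
rewrite ge0_integralZl_EFin // 1?[X in _ <= X]ge0_integralZl_EFin //.
- exact: lee_wpmul2l (le A GA); rewrite lee_fin.
all: by [move=> w _; rewrite lee_fin | exact/measurable_EFinP/measurable_funTS].
Qed.

Lemma noise_le_oracle {Gnext : set (set T)} {sigma : R} {d : nat}
    {U : T -> 'rV[R]_d -> 'rV[R]_d} {Y : T -> 'rV[R]_d} :
  Gnext `<=` measurable -> oracle P G Gnext sigma U -> meas_wrt G Y ->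
  noise_le P G (fun w => enorm (U w (Y w)) ^+ 2)%R (sigma ^+ 2).
Proof.
move=> Gnext_meas oracleU Y_meas; have [UY_meas _ _ moment] := oracleU Y Y_meas.
split; [exact: sqr_ge0 | exact: measurable_enorm_sqr Gnext_meas UY_meas |
        by move=> w; exact: sqr_ge0 |].
by move=> A GA; rewrite integral_cst; [exact: moment | exact: G_meas _ GA].
Qed.

Lemma cond_le_noise {Z h N : T -> R} {s : R} :
  measurable_fun setT Z -> measurable_fun setT h ->
  (forall w, 0 <= Z w)%R -> (forall w, 0 <= h w)%R -> noise_le P G N s ->
  (forall w, Z w <= h w + N w)%R -> cond_le P G Z (fun w => h w + s)%R.
Proof.
move=> mZ mh Z_ge0 h_ge0 [s_ge0 mN N_ge0 le] Z_le A GA; have mA := G_meas _ GA.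
apply: (@le_trans _ _ (\int[P]_(w in A) ((h w)%:E + (N w)%:E))).
  apply: ge0_le_integral => //.
  - by move=> w _; rewrite lee_fin.
  - exact/measurable_EFinP/measurable_funTS.
  - by apply: emeasurable_funD; exact/measurable_EFinP/measurable_funTS.
  - by move=> w _; rewrite -EFinD lee_fin.
under [X in _ <= X]eq_integral do rewrite EFinD.
rewrite ge0_integralD // 1?[X in _ <= X]ge0_integralD //.
- exact: leeD2l (le A GA).
all: by [move=> w _; rewrite lee_fin | exact/measurable_EFinP/measurable_funTS].
Qed.

End Noise.

Lemma noise_le_sub {dT : measure_display} {T : measurableType dT} {R : realType}
    {P : probability T R} {G G' : set (set T)} {N : T -> R} {s : R} :
  G' `<=` G -> noise_le P G N s -> noise_le P G' N s.
Proof. by move=> G'G [s_ge0 mN N_ge0 le]; split=> // A /G'G; exact: le. Qed.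

Lemma Vfun_ge1 {R : realType} {d : nat} (x c : 'rV[R]_d) : 1 <= Vfun x c.
Proof. by rewrite /Vfun lerDr sqr_ge0. Qed.

Definition lyapunov_drift {dT : measure_display} {T : measurableType dT}
    {R : realType} {d : nat} (P : probability T R) (Fl : nat -> set (set T))
    (X : nat -> T -> 'rV[R]_d) (xs : 'rV[R]_d) :=
  exists c1 c2 : R, [/\ 0 < c1, c1 < 1, 0 < c2 &
    forall t, cond_le P (Fl t) (fun w => Vfun (X t.+1 w) xs)
                               (fun w => c1 * Vfun (X t w) xs + c2)].

Section Lyapunov.
Context {dT : measure_display} {T : measurableType dT} {R : realType} {d : nat}.
Context {P : probability T R} {Fl : nat -> set (set T)}.
Context {X : nat -> T -> 'rV[R]_d} {xs : 'rV[R]_d}.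
Context (filt : filtration Fl) (adapted : forall t, meas_wrt (Fl t) (X t)).

Let Fl_meas t : Fl t `<=` measurable := (filt.1 t).2.

Lemma lyapunov_drift_perturbed {g : 'rV[R]_d -> 'rV[R]_d} {N : nat -> T -> R} {s : R} :
  geometric_drift g xs ->
  (forall t w, dotv (X t.+1 w - g (X t w)) (X t.+1 w - g (X t w)) <= N t w) ->
  (forall t, noise_le P (Fl t) (N t) s) ->
  lyapunov_drift P Fl X xs.
Proof.
move=> [q [C [q_ge0 q_lt1 C_ge0 drift]]] deviation noise.
have [q' [C' [K [q'_gt0 q'_lt1 C'_ge0 K_ge0 perturb]]]] :=
  dotvvD_perturb (d := d) q_ge0 q_lt1 C_ge0.
have [s_ge0 _ _ _] := noise 0%N.
have Ks_ge0 := mulr_ge0 K_ge0 s_ge0.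
exists q', (C' + 1 - q' + K * s); split => //; first lra.
move=> t; have mV n : measurable_fun setT (fun w => Vfun (X n w) xs).
  exact: measurable_funD (measurable_enorm_sqrB (Fl_meas n) (adapted n) xs) _.
pose h w := q' * Vfun (X t w) xs + (C' + 1 - q').
have -> : (fun w => q' * Vfun (X t w) xs + (C' + 1 - q' + K * s)) =
          (fun w => h w + K * s) by apply: funext => w; rewrite /h addrA.
apply: (cond_le_noise (Fl_meas t) _ _ _ _ (noise_leZ (Fl_meas t) K_ge0 (noise t))).
- exact: mV.
- exact: measurable_funD (measurable_funM _ (mV t)) _.
- by move=> w; apply: le_trans (Vfun_ge1 _ _).
- by move=> w; rewrite /h addr_ge0 ?mulr_ge0 ?(le_trans _ (Vfun_ge1 _ _)) //; lra.
move=> w; rewrite /h /Vfun !enorm_sqr.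
have := perturb _ (X t.+1 w - g (X t w)) _ (dotvv_ge0 _) (drift (X t w)).
rewrite addrC addrA subrK.
have := ler_wpM2l K_ge0 (deviation t w); lra.
Qed.

Implicit Types (x y : 'rV[R]_d).
Context {F : 'rV[R]_d -> 'rV[R]_d} {x0 : 'rV[R]_d} {lam mu sigma gamma : R}.
Context {U : nat -> T -> 'rV[R]_d -> 'rV[R]_d}.
Context (lam_ge0 : 0 <= lam) (mu_gt0 : 0 < mu).
Context (coercive :
  forall x, dotv (F x) (x - x0) >= mu * enorm (x - x0) ^+ 2 - lam).
Context (oracleU : forall t, oracle P (Fl t) (Fl t.+1) sigma (U t)).

Let noiseU t := noise_le_oracle (Fl_meas t) (Fl_meas t.+1) (oracleU t) (adapted t).

Lemma lyapunov_drift_sgda {G : R} :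
  (forall t w, X t.+1 w = X t w - gamma *: (F (X t w) + U t w (X t w))) ->
  (forall x, enorm (F x) <= G * (1 + enorm x)) ->
  0 < gamma -> gamma < mu / G ^+ 2 ->
  lyapunov_drift P Fl X xs.
Proof.
move=> step growth gamma_gt0 gamma_lt.
apply: (lyapunov_drift_perturbed (g := sgda_map F gamma)
    (N := fun t w => gamma ^+ 2 * enorm (U t w (X t w)) ^+ 2)
    (s := gamma ^+ 2 * sigma ^+ 2)).
- apply: (geometric_drift_recenter _ x0).
  exact (geometric_drift_sgda F lam_ge0 mu_gt0 coercive growth gamma_gt0 gamma_lt).
- by move=> t w; rewrite step sgda_step_deviation.
- by move=> t; exact (noise_leZ (Fl_meas t) (sqr_ge0 gamma) (noiseU t)).
Qed.

Lemma lyapunov_drift_seg {L alpha : R} {Hh : nat -> set (set T)}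
    {Xh : nat -> T -> 'rV[R]_d} {Uh : nat -> T -> 'rV[R]_d -> 'rV[R]_d} :
  (forall t, Hh t `<=` measurable) -> (forall t, Fl t `<=` Hh t) ->
  (forall t, meas_wrt (Hh t) (Xh t)) ->
  (forall t, oracle P (Hh t) (Fl t.+1) sigma (Uh t)) ->
  (forall t w, Xh t w = X t w - gamma *: (F (X t w) + U t w (X t w))) ->
  (forall t w, X t.+1 w = X t w - (alpha * gamma) *: (F (Xh t w) + Uh t w (Xh t w))) ->
  0 <= L -> (forall x y, enorm (F x - F y) <= L * enorm (x - y)) ->
  0 < gamma -> gamma < 1 / (2 * mu + Num.sqrt 3 * L) -> 0 < alpha -> alpha < 1 ->
  lyapunov_drift P Fl X xs.
Proof.
move=> Hh_meas Fl_Hh adaptedh oracleUh stepH step L_ge0 lip gamma_gt0 gamma_lt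
  alpha_gt0 alpha_lt1.
have noiseUh t := noise_le_sub (Fl_Hh t)
  (noise_le_oracle (Hh_meas t) (Fl_meas t.+1) (oracleUh t) (adaptedh t)).
have Lgamma_ge0 : 0 <= 2 * (L ^+ 2 * gamma ^+ 2).
  by rewrite mulr_ge0 // mulr_ge0 // sqr_ge0.
apply: (lyapunov_drift_perturbed (g := seg_map F gamma alpha)
    (N := fun t w => (alpha * gamma) ^+ 2 *
      (2 * (L ^+ 2 * gamma ^+ 2) * enorm (U t w (X t w)) ^+ 2 +
       2 * enorm (Uh t w (Xh t w)) ^+ 2))
    (s := (alpha * gamma) ^+ 2 *
      (2 * (L ^+ 2 * gamma ^+ 2) * sigma ^+ 2 + 2 * sigma ^+ 2))).
- apply: (geometric_drift_recenter _ x0).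
  exact (geometric_drift_seg F lam_ge0 mu_gt0 coercive L_ge0 lip gamma_gt0 gamma_lt
    alpha_gt0 alpha_lt1).
- by move=> t w; rewrite step; exact (seg_step_deviation F lip (stepH t w)).
- move=> t; exact (noise_leZ (Fl_meas t) (sqr_ge0 _) (noise_leD (Fl_meas t)
    (noise_leZ (Fl_meas t) Lgamma_ge0 (noiseU t))
    (noise_leZ (Fl_meas t) (ler0n _ 2) (noiseUh t)))).
Qed.

End Lyapunov.

Theorem corollary1
  (R : realType) (d : nat) (dT : measure_display) (T : measurableType dT)
  (P : probability T R)
  (F : 'rV[R]_d -> 'rV[R]_d) (Rb : R) (xR x0 : 'rV[R]_d)
  (lam mu sigma : R)
  (Fl : nat -> set (set T)) (X : nat -> T -> 'rV[R]_d)
  (U : nat -> T -> 'rV[R]_d -> 'rV[R]_d)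
  (Hh : nat -> set (set T)) (Xh : nat -> T -> 'rV[R]_d)
  (Uh : nat -> T -> 'rV[R]_d -> 'rV[R]_d)
  (gamma alpha Gc L : R) :
  (* F Borel measurable (implicit in the paper) *)
  borel_fun F ->
  (* X* nonempty, containing a point of norm <= R *)
  F xR = 0 -> enorm xR <= Rb ->
  (* the coercivity-type condition at some x0 in X* *)
  F x0 = 0 -> 0 <= lam -> 0 < mu ->
  (forall x, dotv (F x) (x - x0) >= mu * enorm (x - x0) ^+ 2 - lam) ->
  (* stochastic oracle *)
  0 < sigma ->
  filtration Fl ->
  (forall t, meas_wrt (Fl t) (X t)) ->
  (forall t, oracle P (Fl t) (Fl t.+1) sigma (U t)) ->
  (* (i) SGDA  or  (ii) SEG *)
  ( ( (forall t w, X t.+1 w = X t w - gamma *: (F (X t w) + U t w (X t w))) /\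
      (forall x, enorm (F x) <= Gc * (1 + enorm x)) /\
      0 < gamma /\ gamma < mu / Gc ^+ 2 )
    \/
    ( (forall t, sub_sigma (Hh t)) /\
      (forall t, Fl t `<=` Hh t /\ Hh t `<=` Fl t.+1) /\
      (forall t, meas_wrt (Hh t) (Xh t)) /\
      (forall t, oracle P (Hh t) (Fl t.+1) sigma (Uh t)) /\
      (forall t w, Xh t w = X t w - gamma *: (F (X t w) + U t w (X t w))) /\
      (forall t w, X t.+1 w =
          X t w - (alpha * gamma) *: (F (Xh t w) + Uh t w (Xh t w))) /\
      0 <= L /\ (forall x y, enorm (F x - F y) <= L * enorm (x - y)) /\
      0 < gamma /\ gamma < 1 / (2 * mu + Num.sqrt 3 * L) /\
      0 < alpha /\ alpha < 1 ) ) ->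
  forall xs : 'rV[R]_d, F xs = 0 ->
  exists c1 c2 : R, [/\ 0 < c1, c1 < 1, 0 < c2 &
    forall t : nat,
      cond_le P (Fl t) (fun w => Vfun (X t.+1 w) xs)
                       (fun w => c1 * Vfun (X t w) xs + c2)].
Proof.
move=> _ _ _ _ lam_ge0 mu_gt0 coercive _ filt adapted oracleU algorithm xs _.
case: algorithm => [[step [growth [gamma_gt0 gamma_lt]]] |
  [Hh_sub [Hh_between [adaptedh [oracleUh [stepH [step
    [L_ge0 [lip [gamma_gt0 [gamma_lt [alpha_gt0 alpha_lt1]]]]]]]]]]]].
- exact (lyapunov_drift_sgda filt adapted lam_ge0 mu_gt0 coercive oracleU
    step growth gamma_gt0 gamma_lt).
- exact (lyapunov_drift_seg filt adapted lam_ge0 mu_gt0 coercive oracleU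
    (fun t => (Hh_sub t).2) (fun t => (Hh_between t).1) adaptedh oracleUh
    stepH step L_ge0 lip gamma_gt0 gamma_lt alpha_gt0 alpha_lt1).
Qed.
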